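(* Let $\mathcal K$ be a 2-category and $\{\lambda_{i,j}:s_js_i\to s_is_j\}_{0\le i<j\le 2}$ a 0-cell of $\mathsf{Wdl}^{(2)}(\overline{\mathcal K})$. Then $\varphi^1_{0,2}:=\bar\lambda_{012}.s_0\eta_1s_2:s_0s_2\to s_0s_1s_2$ is a homomorphism of monads in $\overline{\mathcal K}$ from $(s_0s_2,\bar\lambda_{02})$ to $(s_0s_1s_2,\bar\lambda_{012})$; equivalently, $((A,1_{1_A}),\varphi^1_{0,2})$ is a 1-cell $(A,(s_0s_1s_2,\bar\lambda_{012}))\to(A,(s_0s_2,\bar\lambda_{02}))$ in $\mathsf{Mnd}(\overline{\mathcal K})$.
   Context: Conventions. For 1-cells, $uw$ is the horizontal composite ($w$ first); for 2-cells $\alpha,\beta$, $\alpha\beta$ is their horizontal composite; a 1-cell next to a 2-cell means whiskering; $\alpha.\beta$ is vertical composition ($\beta$ first). A monad $(A,t)$ has multiplication $\mu:tt\to t$, unit $\eta:1_A\to t$; indices carry over. Local idempotent closure $\overline{\mathcal K}$: same 0-cells as $\mathcal K$; 1-cells are pairs $(v,\bar v)$ with $v$ a 1-cell of $\mathcal K$ and $\bar v$ an idempotent 2-cell on $v$; 2-cells $(v,\bar v)\to(v',\bar v')$ are 2-cells $\omega:v\to v'$ of $\mathcal K$ with $\bar v'.\omega=\omega=\omega.\bar v$; compositions from $\mathcal K$, identity 2-cell of $(v,\bar v)$ is $\bar v$. Monads $(A,(t,\bar t))$ in $\overline{\mathcal K}$ satisfy $\mu.t\eta=\mu.\eta t=\bar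 t$; we write just $t$. A homomorphism of monads $\varphi:(t,\bar t)\to(r,\bar r)$ on $A$ is a 2-cell of $\overline{\mathcal K}$ with $\varphi.\mu_t=\mu_r.\varphi\varphi$, $\varphi.\eta_t=\eta_r$. $\mathsf{Mnd}(\overline{\mathcal K})$: 1-cells $(A,t)\to(A',t')$ are $(v,\psi)$, $\psi:t'v\to vt$ in $\overline{\mathcal K}$, with $\psi.\mu'v=v\mu.\psi t.t'\psi$, $\psi.\eta'v=v\eta$. Weak distributive law in $\overline{\mathcal K}$: monads $(A,t),(A,s)$ and $\lambda:ts\to st$ in $\overline{\mathcal K}$ with $\lambda.\mu s=s\mu.\lambda t.t\lambda$, $\lambda.t\mu=\mu t.s\lambda.\lambda s$, $\lambda.\eta s=\mu t.s\lambda.st\eta.s\eta$, $\lambda.t\eta=s\mu.\lambda t.\eta st.\eta t$; idempotent $\bar\lambda:=\mu t.s\lambda.st\eta$. A 0-cell of $\mathsf{Wdl}^{(2)}(\overline{\mathcal K})$: monads $(A,s_0),(A,s_1),(A,s_2)$ in $\overline{\mathcal K}$ and weak distributive laws $\lambda_{i,j}:s_js_i\to s_is_j$ with $\lambda_{0,1}s_2.s_1\lambda_{0,2}.\lambda_{1,2}s_0=s_0\lambda_{1,2}.\lambda_{0,2}s_1.s_2\lambda_{0,1}$; $\bar\lambda_{ij}$ is the idempotent of $\lambda_{i,j}$. Monads: $(s_0s_2,\bar\lambda_{02})$ has multiplication $\mu_0\mu_2.s_0\lambda_{0,2}s_2$ and unit $\lambda_{0,2}.\eta_2\eta_0$. Define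 $\bar\lambda_{012}:=\overleftarrow\lambda_{0,1,2}.\bar\lambda_{01}s_2$ with $\overleftarrow\lambda_{0,1,2}:=s_0s_1\mu_2.s_0\lambda_{1,2}s_2.\lambda_{0,2}s_1s_2.\eta_2s_0s_1s_2$; $(s_0s_1s_2,\bar\lambda_{012})$ has multiplication $\bar\lambda_{012}.\mu_0\mu_1\mu_2.s_0s_0\lambda_{1,2}s_2.s_0\lambda_{0,1}s_2s_1s_2.s_0s_1\lambda_{0,2}s_1s_2$ and unit $\bar\lambda_{012}.s_0\lambda_{1,2}.\lambda_{0,2}s_1.s_2\lambda_{0,1}.\eta_2\eta_1\eta_0$. *)

(* Conventions (as in the paper):
     comp1 u w  = uw           (w first)
     hcomp a b  = ab           (horizontal composite)
     vcomp a b  = a.b          (b first)                                   *)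

Record TwoCat := {
  obj : Type;
  hom : obj -> obj -> Type;
  cell : obj -> obj -> Type;
  src : forall A B, cell A B -> hom A B;
  tgt : forall A B, cell A B -> hom A B;
  id1 : forall A, hom A A;
  comp1 : forall A B C, hom B C -> hom A B -> hom A C;
  id2 : forall A B, hom A B -> cell A B;
  vcomp : forall A B, cell A B -> cell A B -> cell A B;
  hcomp : forall A B C, cell B C -> cell A B -> cell A C;

  comp1_assoc : forall A B C D (u : hom C D) (v : hom B C) (w : hom A B),
      comp1 _ _ _ (comp1 _ _ _ u v) w = comp1 _ _ _ u (comp1 _ _ _ v w);
  comp1_id_l : forall A B (u : hom A B), comp1 _ _ _ (id1 B) u = u;
  comp1_id_r : forall A B (u : hom A B), comp1 _ _ _ u (id1 A) = u;

  src_id2 : forall A B (u : hom A B), src _ _ (id2 _ _ u) = u;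
  tgt_id2 : forall A B (u : hom A B), tgt _ _ (id2 _ _ u) = u;
  src_vcomp : forall A B (a b : cell A B), tgt _ _ b = src _ _ a ->
      src _ _ (vcomp _ _ a b) = src _ _ b;
  tgt_vcomp : forall A B (a b : cell A B), tgt _ _ b = src _ _ a ->
      tgt _ _ (vcomp _ _ a b) = tgt _ _ a;
  vcomp_assoc : forall A B (a b c : cell A B),
      tgt _ _ c = src _ _ b -> tgt _ _ b = src _ _ a ->
      vcomp _ _ a (vcomp _ _ b c) = vcomp _ _ (vcomp _ _ a b) c;
  vcomp_id_l : forall A B (a : cell A B), vcomp _ _ (id2 _ _ (tgt _ _ a)) a = a;
  vcomp_id_r : forall A B (a : cell A B), vcomp _ _ a (id2 _ _ (src _ _ a)) = a;

  src_hcomp : forall A B C (a : cell B C) (b : cell A B),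
      src _ _ (hcomp _ _ _ a b) = comp1 _ _ _ (src _ _ a) (src _ _ b);
  tgt_hcomp : forall A B C (a : cell B C) (b : cell A B),
      tgt _ _ (hcomp _ _ _ a b) = comp1 _ _ _ (tgt _ _ a) (tgt _ _ b);
  hcomp_assoc : forall A B C D (a : cell C D) (b : cell B C) (c : cell A B),
      hcomp _ _ _ (hcomp _ _ _ a b) c = hcomp _ _ _ a (hcomp _ _ _ b c);
  hcomp_id_l : forall A B (a : cell A B), hcomp _ _ _ (id2 _ _ (id1 B)) a = a;
  hcomp_id_r : forall A B (a : cell A B), hcomp _ _ _ a (id2 _ _ (id1 A)) = a;
  hcomp_id2 : forall A B C (u : hom B C) (w : hom A B),
      hcomp _ _ _ (id2 _ _ u) (id2 _ _ w) = id2 _ _ (comp1 _ _ _ u w);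
  interchange : forall A B C (a a' : cell B C) (b b' : cell A B),
      tgt _ _ a' = src _ _ a -> tgt _ _ b' = src _ _ b ->
      hcomp _ _ _ (vcomp _ _ a a') (vcomp _ _ b b')
      = vcomp _ _ (hcomp _ _ _ a b) (hcomp _ _ _ a' b')
}.

Arguments hom {_} A B.
Arguments cell {_} A B.
Arguments src {_ A B} _.
Arguments tgt {_ A B} _.
Arguments id1 {_} A.
Arguments comp1 {_ A B C} _ _.
Arguments id2 {_ A B} _.
Arguments vcomp {_ A B} _ _.
Arguments hcomp {_ A B C} _ _.

Section Kbar.
Context {K : TwoCat}.

(* (v, e) is a 1-cell of the local idempotent closure: e idempotent 2-cell on v *)
Definition idem {A B : obj K} (v : hom A B) (e : cell A B) : Prop :=
  src e = v /\ tgt e = v /\ vcomp e e = e.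

(* w is a 2-cell (v, e) -> (v', e') of the local idempotent closure *)
Definition bar_cell {A B : obj K} (v : hom A B) (e : cell A B)
    (v' : hom A B) (e' : cell A B) (w : cell A B) : Prop :=
  src w = v /\ tgt w = v' /\ vcomp e' w = w /\ vcomp w e = w.

(* (A,(t,tb)) with multiplication mu and unit eta is a monad in Kbar.
   Whiskering by a Kbar 1-cell (t,tb) is horizontal composition with its
   identity 2-cell tb. *)
Definition bar_monad {A : obj K} (t : hom A A) (tb mu eta : cell A A) : Prop :=
  idem t tb /\
  bar_cell (comp1 t t) (hcomp tb tb) t tb mu /\
  bar_cell (id1 A) (id2 (id1 A)) t tb eta /\
  vcomp mu (hcomp mu tb) = vcomp mu (hcomp tb mu) /\
  vcomp mu (hcomp tb eta) = tb /\
  vcomp mu (hcomp eta tb) = tb.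

Definition wdl {A : obj K} (t : hom A A) (tb mut etat : cell A A)
    (s : hom A A) (sb mus etas : cell A A) (lam : cell A A) : Prop :=
  bar_monad t tb mut etat /\ bar_monad s sb mus etas /\
  bar_cell (comp1 t s) (hcomp tb sb) (comp1 s t) (hcomp sb tb) lam /\
  vcomp lam (hcomp mut sb)
    = vcomp (hcomp sb mut) (vcomp (hcomp lam tb) (hcomp tb lam)) /\
  vcomp lam (hcomp tb mus)
    = vcomp (hcomp mus tb) (vcomp (hcomp sb lam) (hcomp lam sb)) /\
  vcomp lam (hcomp etat sb)
    = vcomp (hcomp mus tb) (vcomp (hcomp sb lam)
        (vcomp (hcomp sb (hcomp tb etas)) (hcomp sb etat))) /\
  vcomp lam (hcomp tb etas)
    = vcomp (hcomp sb mut) (vcomp (hcomp lam tb)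
        (vcomp (hcomp etat (hcomp sb tb)) (hcomp etas tb))).

Definition wdl_idem {A : obj K} (tb : cell A A) (sb mus etas : cell A A)
    (lam : cell A A) : cell A A :=
  vcomp (hcomp mus tb) (vcomp (hcomp sb lam) (hcomp sb (hcomp tb etas))).

Definition monad_hom {A : obj K} (t : hom A A) (tb mut etat : cell A A)
    (r : hom A A) (rb mur etar : cell A A) (phi : cell A A) : Prop :=
  bar_cell t tb r rb phi /\
  vcomp phi mut = vcomp mur (hcomp phi phi) /\
  vcomp phi etat = etar.

Definition mnd_1cell {A A' : obj K}
    (t : hom A A) (tb mu eta : cell A A)
    (t' : hom A' A') (tb' mu' eta' : cell A' A')
    (v : hom A A') (vb : cell A A') (psi : cell A A') : Prop :=
  idem v vb /\
  bar_cell (comp1 t' v) (hcomp tb' vb) (comp1 v t) (hcomp vb tb) psi /\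
  vcomp psi (hcomp mu' vb)
    = vcomp (hcomp vb mu) (vcomp (hcomp psi tb) (hcomp tb' psi)) /\
  vcomp psi (hcomp eta' vb) = hcomp vb eta.

Record wdl2_data (A : obj K) := {
  s0 : hom A A; b0 : cell A A; m0 : cell A A; e0 : cell A A;
  s1 : hom A A; b1 : cell A A; m1 : cell A A; e1 : cell A A;
  s2 : hom A A; b2 : cell A A; m2 : cell A A; e2 : cell A A;
  l01 : cell A A;  (* lambda_{0,1} : s1 s0 -> s0 s1 *)
  l02 : cell A A;  (* lambda_{0,2} : s2 s0 -> s0 s2 *)
  l12 : cell A A   (* lambda_{1,2} : s2 s1 -> s1 s2 *)
}.

Arguments s0 {A} _. Arguments b0 {A} _. Arguments m0 {A} _. Arguments e0 {A} _.
Arguments s1 {A} _. Arguments b1 {A} _. Arguments m1 {A} _. Arguments e1 {A} _.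
Arguments s2 {A} _. Arguments b2 {A} _. Arguments m2 {A} _. Arguments e2 {A} _.
Arguments l01 {A} _. Arguments l02 {A} _. Arguments l12 {A} _.


(* 0-cell of Wdl^(2)(Kbar): lambda_{i,j} : s_j s_i -> s_i s_j weak distributive
   laws (t := s_j, s := s_i) plus the Yang-Baxter condition *)
Definition is_wdl2 {A : obj K} (D : wdl2_data A) : Prop :=
  wdl (s1 D) (b1 D) (m1 D) (e1 D) (s0 D) (b0 D) (m0 D) (e0 D) (l01 D) /\
  wdl (s2 D) (b2 D) (m2 D) (e2 D) (s0 D) (b0 D) (m0 D) (e0 D) (l02 D) /\
  wdl (s2 D) (b2 D) (m2 D) (e2 D) (s1 D) (b1 D) (m1 D) (e1 D) (l12 D) /\
  vcomp (hcomp (l01 D) (b2 D)) (vcomp (hcomp (b1 D) (l02 D)) (hcomp (l12 D) (b0 D)))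
  = vcomp (hcomp (b0 D) (l12 D)) (vcomp (hcomp (l02 D) (b1 D)) (hcomp (b2 D) (l01 D))).

Section Composites.
Context {A : obj K} (D : wdl2_data A).

Definition lbar01 : cell A A := wdl_idem (b1 D) (b0 D) (m0 D) (e0 D) (l01 D).
Definition lbar02 : cell A A := wdl_idem (b2 D) (b0 D) (m0 D) (e0 D) (l02 D).

Definition mult02 : cell A A :=
  vcomp (hcomp (m0 D) (m2 D)) (hcomp (b0 D) (hcomp (l02 D) (b2 D))).
Definition unit02 : cell A A := vcomp (l02 D) (hcomp (e2 D) (e0 D)).

Definition larrow012 : cell A A :=
  vcomp (hcomp (b0 D) (hcomp (b1 D) (m2 D)))
  (vcomp (hcomp (b0 D) (hcomp (l12 D) (b2 D)))
  (vcomp (hcomp (l02 D) (hcomp (b1 D) (b2 D)))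
         (hcomp (e2 D) (hcomp (b0 D) (hcomp (b1 D) (b2 D)))))).

Definition lbar012 : cell A A := vcomp larrow012 (hcomp lbar01 (b2 D)).

Definition mult012 : cell A A :=
  vcomp lbar012
  (vcomp (hcomp (m0 D) (hcomp (m1 D) (m2 D)))
  (vcomp (hcomp (b0 D) (hcomp (b0 D) (hcomp (b1 D) (hcomp (l12 D) (b2 D)))))
  (vcomp (hcomp (b0 D) (hcomp (l01 D) (hcomp (b2 D) (hcomp (b1 D) (b2 D)))))
         (hcomp (b0 D) (hcomp (b1 D) (hcomp (l02 D) (hcomp (b1 D) (b2 D)))))))).

Definition unit012 : cell A A :=
  vcomp lbar012
  (vcomp (hcomp (b0 D) (l12 D))
  (vcomp (hcomp (l02 D) (b1 D))
  (vcomp (hcomp (b2 D) (l01 D))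
         (hcomp (e2 D) (hcomp (e1 D) (e0 D)))))).

Definition phi1_02 : cell A A :=
  vcomp lbar012 (hcomp (b0 D) (hcomp (e1 D) (b2 D))).

End Composites.
End Kbar.

Arguments s0 {K A} _. Arguments b0 {K A} _. Arguments m0 {K A} _. Arguments e0 {K A} _.
Arguments s1 {K A} _. Arguments b1 {K A} _. Arguments m1 {K A} _. Arguments e1 {K A} _.
Arguments s2 {K A} _. Arguments b2 {K A} _. Arguments m2 {K A} _. Arguments e2 {K A} _.
Arguments l01 {K A} _. Arguments l02 {K A} _. Arguments l12 {K A} _.

From Stdlib Require Import List Arith Lia Bool.
Import ListNotations.

(* Every 2-cell in the statement is a composite of whiskered multiplications, units and
   distributive laws of the three monads, that is, a string diagram on strands labelled
   0, 1, 2.  Diagrams are encoded as lists of layers; by the interchange law, layers acting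
   on disjoint strands commute, so diagrams with the same normal form denote the same 2-cell,
   and an equation between diagrams may be used inside a larger one.  The monad axioms, the
   weak distributive law axioms and the Yang-Baxter condition become such equations.  From
   them one shows that the idempotent of the composite law s2 (s0 s1) -> (s0 s1) s2 is
   compatible with the one of lambda_01, hence that lbar012 is idempotent and that
   phi := lbar012 . s0 eta1 s2 is a 2-cell from (s0 s2, lbar02) to (s0 s1 s2, lbar012).
   Compatibility with the units is a direct computation; compatibility with the
   multiplications reduces, through the composite law, to the multiplicativity of
   lbar01 . s0 eta1 : s0 -> s0 s1.  The 1-cell condition in Mnd follows because phi absorbs
   the idempotents on both sides. *)

Lemma vcomp_hcomp_absorb (K : TwoCat) (A B C : obj K) (x e : cell B C) (e' y : cell A B) :
  tgt e = src x -> tgt y = src e' -> vcomp x e = x -> vcomp e' y = y ->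
  vcomp (hcomp x e') (hcomp e y) = hcomp x y.
Proof. intros Hxe Hye' Ex Ey; rewrite <- interchange by assumption; congruence. Qed.

Lemma firstn_app_length {T : Type} (f s r : list T) : firstn (length f) (f ++ s ++ r) = f.
Proof. rewrite firstn_app, Nat.sub_diag, firstn_all; cbn; apply app_nil_r. Qed.

Lemma skipn_app_length {T : Type} (f s r : list T) : skipn (length f + length s) (f ++ s ++ r) = r.
Proof. rewrite app_assoc, <- length_app, skipn_app, skipn_all, Nat.sub_diag; reflexivity. Qed.

Lemma app_split_le {T : Type} (x1 x2 y1 y2 : list T) :
  x1 ++ x2 = y1 ++ y2 -> length x1 <= length y1 -> exists m, y1 = x1 ++ m /\ x2 = m ++ y2.
Proof.
  intros E Hl; destruct (app_eq_app _ _ _ _ E) as (m & [[E1 E2]|[E1 E2]]); [|eauto].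
  subst; rewrite length_app in Hl; destruct m; [|cbn in Hl; lia].
  exists []; rewrite !app_nil_r; auto.
Qed.

(** * String diagrams *)

Inductive atom := Mu (i : nat) | Eta (i : nat) | Lam (i j : nat).

Definition atom_src (a : atom) : list nat :=
  match a with Mu i => [i; i] | Eta _ => [] | Lam i j => [j; i] end.
Definition atom_tgt (a : atom) : list nat :=
  match a with Mu i => [i] | Eta i => [i] | Lam i j => [i; j] end.

(* A word [w] stands for the 1-cell [s_(w_0) s_(w_1) ...]; a layer [(k, a)]
   applies the atom [a] to the letters of the current word starting at
   position [k], and a diagram is a list of layers, applied first to last. *)
Definition layer := (nat * atom)%type.
Definition diagram := list layer.

Definition diagram_eq_dec (c d : diagram) : {c = d} + {c <> d}.
Proof. repeat decide equality. Defined.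

Section Syntax.
Variable n : nat.

Definition atom_ok (a : atom) : bool :=
  match a with
  | Mu i | Eta i => i <? n
  | Lam i j => (i <? j) && (j <? n)
  end.
Definition word_ok (w : list nat) : bool := forallb (fun i => i <? n) w.

Definition layer_ok (w : list nat) (l : layer) : bool :=
  let (k, a) := l in
  atom_ok a && word_ok w && (k + length (atom_src a) <=? length w) &&
  if list_eq_dec Nat.eq_dec (firstn (length (atom_src a)) (skipn k w)) (atom_src a)
  then true else false.

Definition layer_apply (w : list nat) (l : layer) : list nat :=
  let (k, a) := l in firstn k w ++ atom_tgt a ++ skipn (k + length (atom_src a)) w.

Fixpoint diagram_ok (w : list nat) (c : diagram) : bool :=
  match c with
  | [] => word_ok w
  | l :: c' => layer_ok w l && diagram_ok (layer_apply w l) c'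
  end.

Fixpoint diagram_out (w : list nat) (c : diagram) : list nat :=
  match c with [] => w | l :: c' => diagram_out (layer_apply w l) c' end.

Definition shift (m : nat) (l : layer) : layer := let (k, a) := l in (m + k, a).

Lemma word_ok_app u v : word_ok (u ++ v) = word_ok u && word_ok v.
Proof. apply forallb_app. Qed.

Lemma atom_ok_words a : atom_ok a = true ->
  word_ok (atom_src a) = true /\ word_ok (atom_tgt a) = true.
Proof.
  unfold word_ok; destruct a as [i|i|i j]; cbn [atom_ok atom_src atom_tgt forallb];
    intro Ha; rewrite ?Ha; auto.
  apply andb_true_iff in Ha as [Hij Hj].
  assert (Hi : i <? n = true) by (apply Nat.ltb_lt in Hij, Hj; apply Nat.ltb_lt; lia).
  rewrite Hi, Hj; auto.
Qed.

Lemma layer_apply_at f r a :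
  layer_apply (f ++ atom_src a ++ r) (length f, a) = f ++ atom_tgt a ++ r.
Proof. cbn; rewrite firstn_app_length, skipn_app_length; reflexivity. Qed.

Lemma layer_ok_at f r a : atom_ok a = true -> word_ok f = true -> word_ok r = true ->
  layer_ok (f ++ atom_src a ++ r) (length f, a) = true.
Proof.
  intros Ha Hf Hr; destruct (atom_ok_words a Ha) as [Hs _]; cbn.
  rewrite Ha, !word_ok_app, Hf, Hr, Hs; cbn.
  rewrite skipn_app, Nat.sub_diag, skipn_all; cbn.
  rewrite firstn_app, Nat.sub_diag, firstn_all; cbn; rewrite app_nil_r.
  destruct (list_eq_dec _ _ _) as [_|[]]; [|reflexivity].
  rewrite andb_true_r; apply Nat.leb_le; rewrite !length_app; lia.
Qed.

Lemma layer_ok_inv w k a : layer_ok w (k, a) = true ->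
  exists f r, w = f ++ atom_src a ++ r /\ length f = k /\
    word_ok f = true /\ word_ok r = true /\ atom_ok a = true.
Proof.
  cbn; intro Hk; destruct (list_eq_dec _ _ _) as [Hsrc|];
    rewrite ?andb_false_r in Hk; [|discriminate].
  rewrite andb_true_r in Hk; repeat rewrite andb_true_iff in Hk.
  destruct Hk as [[Ha Hw] Hl]; apply Nat.leb_le in Hl.
  exists (firstn k w), (skipn (k + length (atom_src a)) w).
  assert (Ew : w = firstn k w ++ atom_src a ++ skipn (k + length (atom_src a)) w).
  { rewrite <- (firstn_skipn k w) at 1; f_equal.
    rewrite <- (firstn_skipn (length (atom_src a)) (skipn k w)) at 1.
    rewrite Hsrc, skipn_skipn; do 2 f_equal; lia. }
  split; [exact Ew|]; split; [rewrite length_firstn; lia|].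
  rewrite Ew, !word_ok_app in Hw; repeat rewrite andb_true_iff in Hw; tauto.
Qed.

Lemma diagram_ok_word w c : diagram_ok w c = true -> word_ok w = true.
Proof.
  destruct c as [|[k a] c]; cbn; [auto|].
  intro H; repeat rewrite andb_true_iff in H; tauto.
Qed.

Lemma diagram_ok_app w c1 c2 :
  diagram_ok w (c1 ++ c2) = diagram_ok w c1 && diagram_ok (diagram_out w c1) c2.
Proof.
  revert w; induction c1 as [|l c1 IH]; intro w; cbn.
  - destruct (diagram_ok w c2) eqn:E;
      [rewrite (diagram_ok_word _ _ E) | rewrite andb_false_r]; reflexivity.
  - rewrite IH, andb_assoc; reflexivity.
Qed.

Lemma diagram_out_app w c1 c2 : diagram_out w (c1 ++ c2) = diagram_out (diagram_out w c1) c2.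
Proof. revert w; induction c1; cbn; auto. Qed.

Definition swap_layers (l1 l2 : layer) : option (layer * layer) :=
  let (k1, a1) := l1 in let (k2, a2) := l2 in
  if k2 + length (atom_src a2) <=? k1 then
    Some ((k2, a2), (k1 - length (atom_src a2) + length (atom_tgt a2), a1))
  else if k1 + length (atom_tgt a1) <=? k2 then
    Some ((k2 - length (atom_tgt a1) + length (atom_src a1), a2), (k1, a1))
  else None.

Fixpoint pull_to_front (i : nat) (c : diagram) : option diagram :=
  match c with
  | [] => None
  | l :: c' =>
      match i with
      | 0 => Some c
      | S i' =>
          match pull_to_front i' c' with
          | Some (l2 :: c2) =>
              match swap_layers l l2 with
              | Some (l2', l1') => Some (l2' :: l1' :: c2)
              | None => None
              end
          | _ => None
          end
      end
  end.

Definition fronts (c : diagram) : list diagram :=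
  fold_right (fun i ds => match pull_to_front i c with Some d => d :: ds | None => ds end)
             [] (seq 0 (length c)).

Lemma fronts_pull c d : In d (fronts c) -> exists i, pull_to_front i c = Some d.
Proof.
  unfold fronts; induction (seq 0 (length c)) as [|i s IH]; cbn; [tauto|].
  destruct (pull_to_front i c) eqn:E; [intros [<-|H]; eauto|]; auto.
Qed.

(* Normal forms modulo interchange: a lexicographically least way of listing
   the layers, found by trying every layer that can be moved to the front.
   Only soundness is proved, so the choice of order is immaterial. *)
Definition atom_key (a : atom) : nat :=
  match a with Mu i => i | Eta i => 10 + i | Lam i j => 20 + 10 * i + j end.
Definition layer_lt (l1 l2 : layer) : bool :=
  let (k1, a1) := l1 in let (k2, a2) := l2 in
  (k1 <? k2) || ((k1 =? k2) && (atom_key a1 <? atom_key a2)).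
Definition layer_eqb (l1 l2 : layer) : bool :=
  let (k1, a1) := l1 in let (k2, a2) := l2 in (k1 =? k2) && (atom_key a1 =? atom_key a2).

Fixpoint diagram_lt (x y : diagram) : bool :=
  match x, y with
  | [], [] => false
  | [], _ => true
  | _, [] => false
  | l1 :: x', l2 :: y' => layer_lt l1 l2 || (layer_eqb l1 l2 && diagram_lt x' y')
  end.

Fixpoint min_head (ds : list diagram) : option layer :=
  match ds with
  | [] => None
  | [] :: ds' => min_head ds'
  | (l :: _) :: ds' =>
      match min_head ds' with
      | None => Some l
      | Some m => if layer_lt l m then Some l else Some m
      end
  end.

Fixpoint min_diagram (ds : list diagram) : option diagram :=
  match ds with
  | [] => None
  | x :: ds' =>
      match min_diagram ds' with
      | None => Some x
      | Some y => if diagram_lt x y then Some x else Some y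
      end
  end.

Lemma min_diagram_in ds d : min_diagram ds = Some d -> In d ds.
Proof.
  induction ds as [|x ds IH]; cbn; [discriminate|].
  destruct (min_diagram ds) as [y|]; [destruct (diagram_lt x y)|];
    intro E; injection E as <-; auto.
Qed.

Fixpoint normalize_fuel (fuel : nat) (w : list nat) (c : diagram) : diagram :=
  match fuel with
  | 0 => c
  | S fuel' =>
      let ds := fronts c in
      match min_head ds with
      | None => c
      | Some m =>
          let candidates :=
            map (fun d => match d with
                          | l :: d' => l :: normalize_fuel fuel' (layer_apply w l) d'
                          | [] => c
                          end)
                (filter (fun d => match d with l :: _ => layer_eqb l m | [] => false end) ds) in
          match min_diagram candidates with Some d => d | None => c end
      end
  end.

Definition normalize (w : list nat) (c : diagram) : diagram := normalize_fuel (length c) w c.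

Definition diagrams_equiv (w : list nat) (c d : diagram) : bool :=
  diagram_ok w c && diagram_ok w d &&
  if diagram_eq_dec (normalize w c) (normalize w d) then true else false.

(* [c] agrees up to interchange with [pre], then [c1] acting on the subword
   [u] at position [k], then [post]. *)
Definition subdiagram_at (w : list nat) (c pre : diagram) (k : nat) (u : list nat)
    (c1 post : diagram) : bool :=
  let v := diagram_out w pre in
  (if list_eq_dec Nat.eq_dec (firstn k v ++ u ++ skipn (k + length u) v) v then true else false)
  && (length (firstn k v) =? k) && diagram_ok u c1
  && diagrams_equiv w c (pre ++ map (shift k) c1 ++ post).

End Syntax.

(** * Interpretation in a 2-category *)

Section Interpretation.
Variables (K : TwoCat) (A : obj K) (n : nat).
Variable strand : nat -> hom A A.
Variable strand_idem : nat -> cell A A.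
Variable atom_cell : atom -> cell A A.

(* The singleton clauses keep [word_hom [i; j]] convertible to [comp1 (strand i) (strand j)],
   with no trailing identity, as in the statement. *)
Fixpoint word_hom (w : list nat) : hom A A :=
  match w with
  | [] => id1 A
  | [i] => strand i
  | i :: w' => comp1 (strand i) (word_hom w')
  end.

Fixpoint word_idem (w : list nat) : cell A A :=
  match w with
  | [] => id2 (id1 A)
  | [i] => strand_idem i
  | i :: w' => hcomp (strand_idem i) (word_idem w')
  end.

Lemma word_hom_cons i w : word_hom (i :: w) = comp1 (strand i) (word_hom w).
Proof. destruct w; cbn; [rewrite comp1_id_r|]; reflexivity. Qed.

Lemma word_idem_cons i w : word_idem (i :: w) = hcomp (strand_idem i) (word_idem w).
Proof. destruct w; cbn; [rewrite hcomp_id_r|]; reflexivity. Qed.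

Lemma word_hom_app u v : word_hom (u ++ v) = comp1 (word_hom u) (word_hom v).
Proof.
  induction u as [|i u IH]; cbn [app].
  - rewrite comp1_id_l; reflexivity.
  - rewrite !word_hom_cons, IH, comp1_assoc; reflexivity.
Qed.

Lemma word_idem_app u v : word_idem (u ++ v) = hcomp (word_idem u) (word_idem v).
Proof.
  induction u as [|i u IH]; cbn [app].
  - rewrite hcomp_id_l; reflexivity.
  - rewrite !word_idem_cons, IH, hcomp_assoc; reflexivity.
Qed.

Definition typed (x : cell A A) (u v : list nat) : Prop :=
  src x = word_hom u /\ tgt x = word_hom v.

Lemma typed_hcomp x y u u' v v' :
  typed x u u' -> typed y v v' -> typed (hcomp x y) (u ++ v) (u' ++ v').
Proof.
  intros [Sx Tx] [Sy Ty]; split; rewrite ?src_hcomp, ?tgt_hcomp, word_hom_app; congruence.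
Qed.

Lemma typed_vcomp x y u v w : typed x v w -> typed y u v -> typed (vcomp x y) u w.
Proof.
  intros [Sx Tx] [Sy Ty]; split; [rewrite src_vcomp | rewrite tgt_vcomp]; congruence.
Qed.

Lemma vcomp_assoc_typed a b c t u v w : typed a v w -> typed b u v -> typed c t u ->
  vcomp a (vcomp b c) = vcomp (vcomp a b) c.
Proof. intros [] [] []; apply vcomp_assoc; congruence. Qed.

Lemma interchange_typed a a' b b' u v w u' v' w' :
  typed a v w -> typed a' u v -> typed b v' w' -> typed b' u' v' ->
  hcomp (vcomp a a') (vcomp b b') = vcomp (hcomp a b) (hcomp a' b').
Proof. intros [] [] [] []; apply interchange; congruence. Qed.

Definition kbar_cell (u v : list nat) (x : cell A A) : Prop :=
  bar_cell (word_hom u) (word_idem u) (word_hom v) (word_idem v) x.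

Lemma kbar_typed u v x : kbar_cell u v x -> typed x u v.
Proof. intros (S & T & _); split; assumption. Qed.

Hypothesis strand_idem_ok : forall i, i < n -> idem (strand i) (strand_idem i).

Lemma word_idem_kbar w : word_ok n w = true -> kbar_cell w w (word_idem w).
Proof.
  induction w as [|i w IH]; intro Hw.
  - pose proof (vcomp_id_l _ _ _ (id2 (id1 A))) as E; rewrite tgt_id2 in E.
    repeat split; cbn; rewrite ?src_id2, ?tgt_id2; auto.
  - cbn in Hw; apply andb_true_iff in Hw as [Hi Hw]; apply Nat.ltb_lt in Hi.
    destruct (strand_idem_ok i Hi) as (Si & Ti & Ei).
    destruct (IH Hw) as (Sw & Tw & Ew & _).
    assert (T : typed (hcomp (strand_idem i) (word_idem w)) (i :: w) (i :: w)).
    { apply (typed_hcomp _ _ [i] [i] w w); split; cbn; assumption. }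
    assert (E : vcomp (hcomp (strand_idem i) (word_idem w)) (hcomp (strand_idem i) (word_idem w))
                = hcomp (strand_idem i) (word_idem w)).
    { erewrite <- (interchange_typed _ _ _ _ [i] [i] [i] w w w);
        [rewrite Ei, Ew; reflexivity | split; assumption ..]. }
    unfold kbar_cell, bar_cell; rewrite word_idem_cons; destruct T; auto.
Qed.

Lemma word_idem_idem w : word_ok n w = true -> vcomp (word_idem w) (word_idem w) = word_idem w.
Proof. intro Hw; apply (word_idem_kbar w Hw). Qed.

Lemma kbar_hcomp x y u u' v v' :
  word_ok n u = true -> word_ok n u' = true -> word_ok n v = true -> word_ok n v' = true ->
  kbar_cell u u' x -> kbar_cell v v' y -> kbar_cell (u ++ v) (u' ++ v') (hcomp x y).
Proof.
  intros Ou Ou' Ov Ov' Gx Gy.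
  pose proof (kbar_typed _ _ _ Gx) as Tx; pose proof (kbar_typed _ _ _ Gy) as Ty.
  destruct Gx as (_ & _ & Lx & Rx), Gy as (_ & _ & Ly & Ry).
  destruct (typed_hcomp _ _ _ _ _ _ Tx Ty) as [S T].
  split; [exact S|]; split; [exact T|]; rewrite !word_idem_app; split.
  - erewrite <- (interchange_typed _ _ _ _ u u' u' v v' v');
      [rewrite Lx, Ly; reflexivity | apply kbar_typed, word_idem_kbar; assumption | assumption
      | apply kbar_typed, word_idem_kbar; assumption | assumption].
  - erewrite <- (interchange_typed _ _ _ _ u u u' v v v');
      [rewrite Rx, Ry; reflexivity | assumption | apply kbar_typed, word_idem_kbar; assumption
      | assumption | apply kbar_typed, word_idem_kbar; assumption].
Qed.

Lemma kbar_vcomp x y u v w : word_ok n u = true -> word_ok n w = true ->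
  kbar_cell v w x -> kbar_cell u v y -> kbar_cell u w (vcomp x y).
Proof.
  intros Ou Ow Gx Gy.
  pose proof (kbar_typed _ _ _ Gx) as Tx; pose proof (kbar_typed _ _ _ Gy) as Ty.
  pose proof (kbar_typed _ _ _ (word_idem_kbar u Ou)) as Tu.
  pose proof (kbar_typed _ _ _ (word_idem_kbar w Ow)) as Tw.
  destruct Gx as (_ & _ & Lx & _), Gy as (_ & _ & _ & Ry).
  destruct (typed_vcomp _ _ _ _ _ Tx Ty) as [S T].
  split; [exact S|]; split; [exact T|]; split.
  - rewrite (vcomp_assoc_typed _ _ _ u v w w), Lx; auto.
  - rewrite <- (vcomp_assoc_typed _ _ _ u u v w), Ry; auto.
Qed.

Ltac list_norm := first [ reflexivity | (repeat rewrite <- app_assoc; cbn; reflexivity) ].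
Ltac words_ok := repeat rewrite word_ok_app; repeat (apply andb_true_intro; split); auto.

Lemma typed_conv x u v u' v' : typed x u' v' -> u' = u -> v' = v -> typed x u v.
Proof. intros; subst; assumption. Qed.
Lemma typed_vcomp_conv x y u v v' w :
  typed x v w -> typed y u v' -> v' = v -> typed (vcomp x y) u w.
Proof. intros; subst; eapply typed_vcomp; eassumption. Qed.

Ltac typed_auto :=
  lazymatch goal with
  | |- typed (hcomp _ _) _ _ =>
      eapply typed_conv; [eapply typed_hcomp; typed_auto | list_norm | list_norm]
  | |- typed (vcomp _ _) _ _ => eapply typed_vcomp_conv; [typed_auto | typed_auto | list_norm]
  | |- typed (word_idem _) _ _ =>
      eapply typed_conv; [eapply kbar_typed, word_idem_kbar; words_ok | list_norm | list_norm]
  | |- typed _ _ _ => eapply typed_conv; [eapply kbar_typed; eassumption | list_norm | list_norm]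
  end.

Lemma whiskered_cells_commute x y s1 t1 s2 t2 p1 p2 q :
  kbar_cell s1 t1 x -> kbar_cell s2 t2 y ->
  word_ok n p1 = true -> word_ok n p2 = true -> word_ok n q = true -> word_ok n s1 = true ->
  word_ok n t1 = true -> word_ok n s2 = true -> word_ok n t2 = true ->
  vcomp (hcomp (word_idem p1) (hcomp y (word_idem (p2 ++ t1 ++ q))))
        (hcomp (word_idem (p1 ++ s2 ++ p2)) (hcomp x (word_idem q)))
  = vcomp (hcomp (word_idem (p1 ++ t2 ++ p2)) (hcomp x (word_idem q)))
          (hcomp (word_idem p1) (hcomp y (word_idem (p2 ++ s1 ++ q)))).
Proof.
  intros Gx Gy O1 O2 O3 O4 O5 O6 O7.
  pose proof Gx as (_ & _ & Lx & Rx); pose proof Gy as (_ & _ & Ly & Ry).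
  transitivity (hcomp (word_idem p1) (hcomp y (hcomp (word_idem p2) (hcomp x (word_idem q))))).
  - rewrite !word_idem_app, !hcomp_assoc.
    erewrite <- (interchange_typed (word_idem p1) (word_idem p1)); [|typed_auto ..].
    rewrite word_idem_idem by assumption.
    erewrite <- (interchange_typed y (word_idem s2)); [|typed_auto ..]. rewrite Ry.
    erewrite <- (interchange_typed (word_idem p2) (word_idem p2)); [|typed_auto ..].
    rewrite word_idem_idem by assumption.
    erewrite <- (interchange_typed (word_idem t1) x); [|typed_auto ..].
    rewrite Lx, word_idem_idem by assumption; reflexivity.
  - rewrite !word_idem_app, !hcomp_assoc.
    erewrite <- (interchange_typed (word_idem p1) (word_idem p1)); [|typed_auto ..].
    rewrite word_idem_idem by assumption.
    erewrite <- (interchange_typed (word_idem t2) y); [|typed_auto ..]. rewrite Ly.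
    erewrite <- (interchange_typed (word_idem p2) (word_idem p2)); [|typed_auto ..].
    rewrite word_idem_idem by assumption.
    erewrite <- (interchange_typed x (word_idem s1)); [|typed_auto ..].
    rewrite Rx, word_idem_idem by assumption; reflexivity.
Qed.

Hypothesis atom_cell_ok :
  forall a, atom_ok n a = true -> kbar_cell (atom_src a) (atom_tgt a) (atom_cell a).

Definition layer_cell (w : list nat) (l : layer) : cell A A :=
  let (k, a) := l in
  hcomp (word_idem (firstn k w))
        (hcomp (atom_cell a) (word_idem (skipn (k + length (atom_src a)) w))).

Fixpoint diagram_cell (w : list nat) (c : diagram) : cell A A :=
  match c with
  | [] => word_idem w
  | l :: c' => vcomp (diagram_cell (layer_apply w l) c') (layer_cell w l)
  end.

Lemma layer_cell_at f r a :
  layer_cell (f ++ atom_src a ++ r) (length f, a)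
  = hcomp (word_idem f) (hcomp (atom_cell a) (word_idem r)).
Proof. cbn; rewrite firstn_app_length, skipn_app_length; reflexivity. Qed.

Lemma layer_cell_kbar w l : layer_ok n w l = true ->
  kbar_cell w (layer_apply w l) (layer_cell w l) /\ word_ok n (layer_apply w l) = true.
Proof.
  destruct l as [k a]; intro Hl.
  destruct (layer_ok_inv _ _ _ _ Hl) as (f & r & -> & <- & Of & Or & Oa).
  rewrite layer_cell_at, layer_apply_at.
  destruct (atom_ok_words _ a Oa) as [Os Ot].
  split; [|words_ok].
  apply kbar_hcomp; try words_ok; [apply word_idem_kbar; assumption|].
  apply kbar_hcomp; auto; apply word_idem_kbar; assumption.
Qed.

Lemma diagram_cell_kbar w c : diagram_ok n w c = true ->
  kbar_cell w (diagram_out w c) (diagram_cell w c) /\ word_ok n (diagram_out w c) = true.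
Proof.
  revert w; induction c as [|l c IH]; intros w Hc; cbn in *.
  - split; [apply word_idem_kbar|]; assumption.
  - apply andb_true_iff in Hc as [Hl Hc].
    destruct (layer_cell_kbar _ _ Hl) as [Gl Ol]; destruct (IH _ Hc) as [Gc Oc].
    split; [|assumption].
    eapply kbar_vcomp; [apply (diagram_ok_word n w (l :: c)); cbn; rewrite Hl, Hc; reflexivity
                       | assumption | exact Gc | exact Gl].
Qed.

Lemma diagram_cell_app w c1 c2 : diagram_ok n w (c1 ++ c2) = true ->
  diagram_cell w (c1 ++ c2) = vcomp (diagram_cell (diagram_out w c1) c2) (diagram_cell w c1).
Proof.
  revert w; induction c1 as [|l c1 IH]; intros w Hc; cbn [app diagram_cell diagram_out] in *.
  - symmetry; apply (diagram_cell_kbar w c2 Hc).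
  - cbn in Hc; apply andb_true_iff in Hc as [Hl Hc].
    rewrite IH by assumption; rewrite diagram_ok_app in Hc; apply andb_true_iff in Hc as [H1 H2].
    symmetry; eapply vcomp_assoc_typed; apply kbar_typed;
      [apply diagram_cell_kbar | apply diagram_cell_kbar | apply layer_cell_kbar]; eassumption.
Qed.

Lemma whisker_vcomp p q x y u v w :
  word_ok n p = true -> word_ok n q = true -> word_ok n v = true ->
  kbar_cell v w x -> kbar_cell u v y ->
  hcomp (word_idem p) (hcomp (vcomp x y) (word_idem q))
  = vcomp (hcomp (word_idem p) (hcomp x (word_idem q)))
          (hcomp (word_idem p) (hcomp y (word_idem q))).
Proof.
  intros Op Oq Ov Gx Gy.
  rewrite <- (word_idem_idem q) at 1 by assumption.
  erewrite interchange_typed; [|typed_auto ..].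
  rewrite <- (word_idem_idem p) at 1 by assumption.
  erewrite interchange_typed; [reflexivity | typed_auto ..].
Qed.

Lemma diagram_whisker p q u c :
  diagram_ok n u c = true -> word_ok n p = true -> word_ok n q = true ->
  diagram_ok n (p ++ u ++ q) (map (shift (length p)) c) = true /\
  diagram_out (p ++ u ++ q) (map (shift (length p)) c) = p ++ diagram_out u c ++ q /\
  hcomp (word_idem p) (hcomp (diagram_cell u c) (word_idem q))
  = diagram_cell (p ++ u ++ q) (map (shift (length p)) c).
Proof.
  intros Hc Op Oq; revert u Hc; induction c as [|[k a] c IH]; intros u Hc.
  - cbn in *; split; [words_ok|]; split; [reflexivity|]; rewrite !word_idem_app; reflexivity.
  - cbn [map shift diagram_ok diagram_out diagram_cell] in *.
    apply andb_true_iff in Hc as [Hl Hc].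
    destruct (layer_ok_inv _ _ _ _ Hl) as (f & r & -> & <- & Of & Or & Oa).
    rewrite layer_apply_at in *.
    destruct (IH _ Hc) as (W & O & E).
    replace (p ++ (f ++ atom_src a ++ r) ++ q) with ((p ++ f) ++ atom_src a ++ (r ++ q))
      by (rewrite <- !app_assoc; reflexivity).
    replace (length p + length f) with (length (p ++ f)) by apply length_app.
    rewrite layer_apply_at, layer_ok_at by (assumption || words_ok).
    replace ((p ++ f) ++ atom_tgt a ++ r ++ q) with (p ++ (f ++ atom_tgt a ++ r) ++ q)
      by (rewrite <- !app_assoc; reflexivity).
    split; [exact W|]; split; [exact O|].
    destruct (diagram_cell_kbar _ _ Hc) as [Gc _].
    destruct (layer_cell_kbar _ _ (layer_ok_at n f r a Oa Of Or)) as [Gl Ol].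
    rewrite layer_cell_at, layer_apply_at in Gl; rewrite layer_apply_at in Ol.
    rewrite !layer_cell_at, <- E, (whisker_vcomp p q _ _ _ _ _ Op Oq Ol Gc Gl).
    rewrite !word_idem_app, !hcomp_assoc; reflexivity.
Qed.

Lemma layer_at_eq w f r a k : w = f ++ atom_src a ++ r -> k = length f ->
  atom_ok n a = true -> word_ok n f = true -> word_ok n r = true ->
  layer_ok n w (k, a) = true /\ layer_apply w (k, a) = f ++ atom_tgt a ++ r /\
  layer_cell w (k, a) = hcomp (word_idem f) (hcomp (atom_cell a) (word_idem r)).
Proof.
  intros -> -> Oa Of Or.
  split; [apply layer_ok_at; assumption|]; split; [apply layer_apply_at | apply layer_cell_at].
Qed.

Lemma layers_commute f p r a b :
  atom_ok n a = true -> atom_ok n b = true ->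
  word_ok n f = true -> word_ok n p = true -> word_ok n r = true ->
  let w := f ++ atom_src a ++ p ++ atom_src b ++ r in
  let c1 := [(length f, a); (length (f ++ atom_tgt a ++ p), b)] in
  let c2 := [(length (f ++ atom_src a ++ p), b); (length f, a)] in
  diagram_ok n w c1 = true /\ diagram_ok n w c2 = true /\
  diagram_out w c1 = diagram_out w c2 /\ diagram_cell w c1 = diagram_cell w c2.
Proof.
  intros Oa Ob Of Op Or w c1 c2.
  destruct (atom_ok_words _ a Oa) as [Sa Ta], (atom_ok_words _ b Ob) as [Sb Tb].
  assert (Ew : w = (f ++ atom_src a ++ p) ++ atom_src b ++ r)
    by (unfold w; rewrite <- !app_assoc; reflexivity).
  assert (Eb : (f ++ atom_src a ++ p) ++ atom_tgt b ++ r
               = f ++ atom_src a ++ (p ++ atom_tgt b ++ r))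
    by (rewrite <- !app_assoc; reflexivity).
  assert (Ea : f ++ atom_tgt a ++ p ++ atom_src b ++ r = (f ++ atom_tgt a ++ p) ++ atom_src b ++ r)
    by (rewrite <- !app_assoc; reflexivity).
  destruct (layer_at_eq w f (p ++ atom_src b ++ r) a _ eq_refl eq_refl) as (Oa1 & Sa1 & Ca1);
    try words_ok.
  destruct (layer_at_eq _ _ r b _ Ea eq_refl) as (Ob1 & Sb1 & Cb1); try words_ok.
  destruct (layer_at_eq w _ r b _ Ew eq_refl) as (Ob2 & Sb2 & Cb2); try words_ok.
  destruct (layer_at_eq _ f (p ++ atom_tgt b ++ r) a _ Eb eq_refl) as (Oa2 & Sa2 & Ca2);
    try words_ok.
  assert (Out : diagram_out w c1 = diagram_out w c2).
  { cbn [diagram_out c1 c2]; rewrite Sa1, Sb1, Sb2, Sa2, <- !app_assoc; reflexivity. }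
  assert (Ok1 : diagram_ok n w c1 = true).
  { cbn [diagram_ok c1]; rewrite Oa1, Sa1, Ob1, Sb1; cbn; words_ok. }
  assert (Ok2 : diagram_ok n w c2 = true).
  { cbn [diagram_ok c2]; rewrite Ob2, Sb2, Oa2, Sa2; cbn; words_ok. }
  split; [exact Ok1|]; split; [exact Ok2|]; split; [exact Out|].
  pose proof (layer_cell_kbar _ _ Ob1) as [(_ & _ & L1 & _) _].
  pose proof (layer_cell_kbar _ _ Oa2) as [(_ & _ & L2 & _) _].
  cbn [diagram_cell c1 c2]; rewrite Sa1, Sb1, Sb2, Sa2, Ca1, Cb1, Cb2, Ca2.
  rewrite Sb1, Cb1, <- !app_assoc in L1; rewrite Sa2, Ca2 in L2.
  rewrite <- !app_assoc, L1, L2; symmetry.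
  apply whiskered_cells_commute; auto.
Qed.

Lemma swap_layers_sound w l1 l2 l2' l1' : diagram_ok n w [l1; l2] = true ->
  swap_layers l1 l2 = Some (l2', l1') ->
  diagram_ok n w [l2'; l1'] = true /\ diagram_out w [l2'; l1'] = diagram_out w [l1; l2] /\
  diagram_cell w [l2'; l1'] = diagram_cell w [l1; l2].
Proof.
  destruct l1 as [k1 a1], l2 as [k2 a2]; intros Hw Hs.
  cbn [diagram_ok] in Hw; repeat rewrite andb_true_iff in Hw; destruct Hw as [Ok1 [Ok2 _]].
  destruct (layer_ok_inv _ _ _ _ Ok1) as (f & r & Ew & <- & Of & Or & Oa1).
  rewrite Ew, layer_apply_at in Ok2.
  destruct (layer_ok_inv _ _ _ _ Ok2) as (f2 & r2 & Ew2 & <- & Of2 & Or2 & Oa2).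
  destruct (atom_ok_words _ a1 Oa1) as [_ Ta1].
  cbn [swap_layers] in Hs.
  destruct (Nat.leb_spec (length f2 + length (atom_src a2)) (length f)) as [L|L].
  - injection Hs as <- <-.
    destruct (app_split_le (f2 ++ atom_src a2) r2 f (atom_tgt a1 ++ r)) as (p & Ef & _);
      [rewrite <- app_assoc, <- Ew2; reflexivity | rewrite length_app; lia |].
    rewrite <- app_assoc in Ef; subst f w.
    rewrite !word_ok_app in Of; repeat rewrite andb_true_iff in Of; destruct Of as (_ & _ & Op).
    destruct (layers_commute f2 p r a2 a1) as (W1 & W2 & O & C); auto.
    replace (length (f2 ++ atom_src a2 ++ p) - length (atom_src a2) + length (atom_tgt a2))
      with (length (f2 ++ atom_tgt a2 ++ p)) by (rewrite !length_app; lia).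
    rewrite <- !app_assoc in *; auto.
  - destruct (Nat.leb_spec (length f + length (atom_tgt a1)) (length f2)) as [L'|L'];
      [|discriminate].
    injection Hs as <- <-.
    destruct (app_split_le (f ++ atom_tgt a1) r f2 (atom_src a2 ++ r2)) as (q & Ef2 & Er);
      [rewrite <- app_assoc, Ew2; reflexivity | rewrite length_app; lia |].
    rewrite <- app_assoc in Ef2; subst f2 r w.
    rewrite !word_ok_app in Of2; repeat rewrite andb_true_iff in Of2; destruct Of2 as (_ & _ & Oq).
    destruct (layers_commute f q r2 a1 a2) as (W1 & W2 & O & C); auto.
    replace (length (f ++ atom_tgt a1 ++ q) - length (atom_tgt a1) + length (atom_src a1))
      with (length (f ++ atom_src a1 ++ q)) by (rewrite !length_app; lia).
    auto.
Qed.

Lemma pull_sound c : forall i w d, diagram_ok n w c = true -> pull_to_front i c = Some d ->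
  diagram_ok n w d = true /\ diagram_out w d = diagram_out w c /\
  diagram_cell w d = diagram_cell w c.
Proof.
  induction c as [|l c IH]; intros i w d Hc Hp; [destruct i; discriminate|].
  destruct i as [|i]; [cbn in Hp; injection Hp as <-; auto|].
  cbn [pull_to_front] in Hp; destruct (pull_to_front i c) as [[|l2 c2]|] eqn:Ep; try discriminate.
  destruct (swap_layers l l2) as [[l2' l1']|] eqn:Es; [|discriminate]; injection Hp as <-.
  cbn [diagram_ok] in Hc; apply andb_true_iff in Hc as [Hl Hc].
  destruct (IH _ _ _ Hc Ep) as (W1 & O1 & C1).
  cbn [diagram_ok] in W1; apply andb_true_iff in W1 as [Hl2 W2].
  assert (Hpair : diagram_ok n w [l; l2] = true)
    by (cbn; rewrite Hl, Hl2; eapply diagram_ok_word; eassumption).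
  destruct (swap_layers_sound _ _ _ _ _ Hpair Es) as (Ws & Os & Cs).
  assert (Wl : diagram_ok n w ([l; l2] ++ c2) = true)
    by (rewrite diagram_ok_app, Hpair; exact W2).
  assert (Wn : diagram_ok n w ([l2'; l1'] ++ c2) = true)
    by (rewrite diagram_ok_app, Ws, Os; exact W2).
  change (l2' :: l1' :: c2) with ([l2'; l1'] ++ c2).
  split; [exact Wn|]; split.
  - rewrite diagram_out_app, Os; cbn; rewrite <- O1; reflexivity.
  - rewrite diagram_cell_app, Os, Cs, <- diagram_cell_app by assumption.
    cbn [app diagram_cell]; rewrite <- C1; reflexivity.
Qed.

Lemma normalize_fuel_sound fuel : forall w c, diagram_ok n w c = true ->
  diagram_ok n w (normalize_fuel fuel w c) = true /\
  diagram_cell w (normalize_fuel fuel w c) = diagram_cell w c.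
Proof.
  induction fuel as [|fuel IH]; intros w c Hc; cbn; [auto|].
  destruct (min_head (fronts c)) as [m|]; [|auto].
  match goal with |- context [min_diagram ?ds] => destruct (min_diagram ds) as [d|] eqn:E end;
    [|auto].
  apply min_diagram_in, in_map_iff in E as (x & Ex & Hx).
  apply filter_In in Hx as [Hx _]; apply fronts_pull in Hx as [i Ei].
  destruct x as [|l x]; [subst d; auto|]; subst d.
  destruct (pull_sound _ _ _ _ Hc Ei) as (W & _ & C).
  cbn [diagram_ok] in W; apply andb_true_iff in W as [Wl W].
  destruct (IH _ _ W) as [W' C'].
  cbn [diagram_ok diagram_cell]; rewrite Wl, W', C'; split; [reflexivity|].
  rewrite <- C; reflexivity.
Qed.

Lemma normalize_sound w c : diagram_ok n w c = true ->
  diagram_ok n w (normalize w c) = true /\ diagram_cell w (normalize w c) = diagram_cell w c.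
Proof. apply normalize_fuel_sound. Qed.

Lemma diagrams_equiv_sound w c d : diagrams_equiv n w c d = true ->
  diagram_cell w c = diagram_cell w d.
Proof.
  unfold diagrams_equiv; destruct (diagram_eq_dec _ _) as [E|];
    rewrite ?andb_false_r, ?andb_true_r; [|discriminate].
  intro H; apply andb_true_iff in H as [Wc Wd].
  rewrite <- (proj2 (normalize_sound w c Wc)), <- (proj2 (normalize_sound w d Wd)), E.
  reflexivity.
Qed.

Lemma diagram_rewrite w c pre k u c1 c2 post :
  subdiagram_at n w c pre k u c1 post = true ->
  diagram_ok n u c2 = true -> diagram_out u c1 = diagram_out u c2 ->
  diagram_ok n w (pre ++ map (shift k) c2 ++ post) = true ->
  diagram_cell u c1 = diagram_cell u c2 ->
  diagram_cell w c = diagram_cell w (pre ++ map (shift k) c2 ++ post).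
Proof.
  unfold subdiagram_at; destruct (list_eq_dec _ _ _) as [Ev|]; [|discriminate].
  intros H W2 O12 Wc2 C12; repeat rewrite andb_true_iff in H.
  destruct H as [[[_ Hk] W1] Hequiv]; apply Nat.eqb_eq in Hk.
  rewrite (diagrams_equiv_sound _ _ _ Hequiv).
  unfold diagrams_equiv in Hequiv; repeat rewrite andb_true_iff in Hequiv.
  destruct Hequiv as [[_ Wc1] _].
  set (v := diagram_out w pre) in *.
  set (p := firstn k v) in *; set (q := skipn (k + length u) v) in *.
  rewrite <- Hk in *.
  assert (Htail : forall c', diagram_ok n w (pre ++ map (shift (length p)) c' ++ post) = true ->
            diagram_ok n u c' = true ->
            diagram_cell w (pre ++ map (shift (length p)) c' ++ post)
            = vcomp (vcomp (diagram_cell (p ++ diagram_out u c' ++ q) post)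
                           (hcomp (word_idem p) (hcomp (diagram_cell u c') (word_idem q))))
                    (diagram_cell w pre)).
  { intros c' Wfull W'.
    rewrite diagram_cell_app by exact Wfull.
    rewrite diagram_ok_app in Wfull; apply andb_true_iff in Wfull as [_ Wrest].
    fold v in Wrest |- *; rewrite <- Ev in Wrest |- *.
    pose proof (diagram_ok_word _ _ _ Wrest) as Ow.
    rewrite !word_ok_app in Ow; repeat rewrite andb_true_iff in Ow; destruct Ow as (Op & _ & Oq).
    destruct (diagram_whisker p q u c' W' Op Oq) as (_ & Out & Cell).
    rewrite diagram_cell_app, Out, <- Cell by exact Wrest; reflexivity. }
  rewrite (Htail c1), (Htail c2), O12, C12 by assumption; reflexivity.
Qed.

Lemma diagram_cell_hcomp u v c1 c2 : diagram_ok n u c1 = true -> diagram_ok n v c2 = true ->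
  hcomp (diagram_cell u c1) (diagram_cell v c2)
  = diagram_cell (u ++ v) (map (shift (length u)) c2 ++ c1).
Proof.
  intros W1 W2.
  destruct (diagram_cell_kbar _ _ W1) as [G1 O1], (diagram_cell_kbar _ _ W2) as [G2 O2].
  pose proof G1 as (_ & _ & _ & R1); pose proof G2 as (_ & _ & L2 & _).
  pose proof (diagram_ok_word _ _ _ W1) as Ou.
  rewrite <- R1, <- L2; erewrite interchange_typed; [|typed_auto ..].
  destruct (diagram_whisker u [] v c2 W2 Ou eq_refl) as (Wa & Oa & Ca).
  destruct (diagram_whisker [] (diagram_out v c2) u c1 W1 eq_refl O2) as (Wb & _ & Cb).
  rewrite !app_nil_r in Wa; rewrite !app_nil_r in Oa; rewrite !app_nil_r in Ca.
  cbn [length app word_idem] in Wb, Cb.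
  rewrite (map_ext (shift 0) (fun l => l)), map_id in Wb, Cb by (intros []; reflexivity).
  rewrite hcomp_id_r in Ca; rewrite hcomp_id_l in Cb.
  rewrite Ca, Cb, <- Oa, diagram_cell_app; [reflexivity|].
  rewrite diagram_ok_app, Wa, Oa; exact Wb.
Qed.

Lemma diagram_cell_vcomp u v c1 c2 : diagram_ok n u (c1 ++ c2) = true ->
  v = diagram_out u c1 ->
  vcomp (diagram_cell v c2) (diagram_cell u c1) = diagram_cell u (c1 ++ c2).
Proof. intros W ->; symmetry; apply diagram_cell_app, W. Qed.

Lemma atom_cell_diagram a : atom_ok n a = true -> atom_cell a = diagram_cell (atom_src a) [(0, a)].
Proof.
  intro Oa; destruct (atom_cell_ok a Oa) as (_ & _ & L & _).
  cbn [diagram_cell layer_cell layer_apply firstn]; rewrite Nat.add_0_l, skipn_all.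
  cbn [word_idem app]; rewrite hcomp_id_l, hcomp_id_r, app_nil_r; symmetry; exact L.
Qed.

End Interpretation.

(** * The three weak distributive laws *)

Notation "'μ' i '@' k" := (k, Mu i) (at level 10, i at level 9, k at level 9).
Notation "'η' i '@' k" := (k, Eta i) (at level 10, i at level 9, k at level 9).
Notation "'λ' i j '@' k" := (k, Lam i j) (at level 10, i at level 9, j at level 9, k at level 9).

(* The composites of the statement as diagrams: [lbar_d i j] is the idempotent of lambda_ij,
   [lam2_d] is [s0 lambda_12 . lambda_02 s1 : s2 s0 s1 -> s0 s1 s2], [larrow_d] is
   overleftarrow-lambda_012, [phi01_d] is [lbar01 . s0 eta1 : s0 -> s0 s1], and the [_raw]
   multiplications omit the final idempotent. *)
Definition lbar_d (i j : nat) : diagram := [η i @ 2; λ i j @ 1; μ i @ 0].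
Definition lbar01_d : diagram := lbar_d 0 1.
Definition lbar02_d : diagram := lbar_d 0 2.
Definition lam2_d : diagram := [λ 0 2 @ 0; λ 1 2 @ 1].
Definition larrow_d : diagram := η 2 @ 0 :: lam2_d ++ [μ 2 @ 2].
Definition lbar012_d : diagram := lbar01_d ++ larrow_d.
Definition phi01_d : diagram := η 1 @ 1 :: lbar01_d.
Definition phi_d : diagram := η 1 @ 1 :: lbar012_d.
Definition mult01_raw_d : diagram := [λ 0 1 @ 1; μ 1 @ 2; μ 0 @ 0].
Definition mult02_d : diagram := [λ 0 2 @ 1; μ 2 @ 2; μ 0 @ 0].
Definition mult012_raw_d : diagram := [λ 0 2 @ 2; λ 0 1 @ 1; λ 1 2 @ 3; μ 2 @ 4; μ 1 @ 2; μ 0 @ 0].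
Definition mult012_d : diagram := mult012_raw_d ++ lbar012_d.
Definition unit02_d : diagram := [η 0 @ 0; η 2 @ 0; λ 0 2 @ 0].
Definition unit012_d : diagram :=
  [η 0 @ 0; η 1 @ 0; η 2 @ 0; λ 0 1 @ 1; λ 0 2 @ 0; λ 1 2 @ 1] ++ lbar012_d.

Section ThreeLaws.
Variables (K : TwoCat) (A : obj K) (D : wdl2_data A).
Hypothesis HD : is_wdl2 D.

Definition strand_of (i : nat) : hom A A :=
  match i with 0 => s0 D | 1 => s1 D | _ => s2 D end.
Definition idem_of (i : nat) : cell A A :=
  match i with 0 => b0 D | 1 => b1 D | _ => b2 D end.
Definition cell_of (a : atom) : cell A A :=
  match a with
  | Mu 0 => m0 D | Mu 1 => m1 D | Mu _ => m2 D
  | Eta 0 => e0 D | Eta 1 => e1 D | Eta _ => e2 D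
  | Lam 0 1 => l01 D | Lam 0 2 => l02 D | Lam _ _ => l12 D
  end.

Lemma strand_monad i : i < 3 ->
  bar_monad (strand_of i) (idem_of i) (cell_of (Mu i)) (cell_of (Eta i)).
Proof.
  destruct HD as ((M1 & M0 & _) & (M2 & _) & _).
  intro Hi; destruct i as [|[|[|i]]]; [exact M0 | exact M1 | exact M2 | lia].
Qed.

Lemma strand_wdl i j : i < j < 3 ->
  wdl (strand_of j) (idem_of j) (cell_of (Mu j)) (cell_of (Eta j))
      (strand_of i) (idem_of i) (cell_of (Mu i)) (cell_of (Eta i)) (cell_of (Lam i j)).
Proof.
  destruct HD as (W01 & W02 & W12 & _).
  intro Hij; destruct i as [|[|i]], j as [|[|[|j]]]; try lia; assumption.
Qed.

Lemma strands_idem i : i < 3 -> idem (strand_of i) (idem_of i).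
Proof. intro Hi; apply (strand_monad i Hi). Qed.

Lemma atoms_kbar a : atom_ok 3 a = true ->
  kbar_cell K A strand_of idem_of (atom_src a) (atom_tgt a) (cell_of a).
Proof.
  destruct a as [i|i|i j]; cbn [atom_ok]; intro Ha.
  - apply Nat.ltb_lt in Ha; apply (strand_monad i Ha).
  - apply Nat.ltb_lt in Ha; apply (strand_monad i Ha).
  - apply andb_true_iff in Ha as [Hij Hj]; apply Nat.ltb_lt in Hij, Hj.
    apply (strand_wdl i j); lia.
Qed.

Local Notation dc := (diagram_cell K A idem_of cell_of).

Lemma reify_atom a : atom_ok 3 a = true -> cell_of a = dc (atom_src a) [(0, a)].
Proof. intro Ha; exact (atom_cell_diagram K A 3 strand_of _ _ atoms_kbar a Ha). Qed.

Lemma reify_idem i : idem_of i = dc [i] [].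
Proof. reflexivity. Qed.

Definition reify_hcomp :=
  diagram_cell_hcomp K A 3 strand_of idem_of cell_of strands_idem atoms_kbar.
Definition reify_vcomp :=
  diagram_cell_vcomp K A 3 strand_of idem_of cell_of strands_idem atoms_kbar.

Ltac reify :=
  repeat match goal with |- context [cell_of ?a] => rewrite (reify_atom a eq_refl) end;
  repeat match goal with |- context [idem_of ?i] => rewrite (reify_idem i) end;
  repeat first [ rewrite reify_hcomp by (vm_compute; reflexivity)
               | rewrite reify_vcomp by (vm_compute; reflexivity) ].

Ltac diagram_equiv :=
  apply (diagrams_equiv_sound K A 3 strand_of idem_of cell_of strands_idem atoms_kbar);
  vm_compute; reflexivity.

Ltac rewrite_diagram_with H pre k post :=
  lazymatch type of H with
  | diagram_cell _ _ _ _ ?u ?c1 = diagram_cell _ _ _ _ _ ?c2 =>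
    lazymatch goal with
    | |- diagram_cell _ _ _ _ ?w ?c = _ =>
      let d := eval vm_compute in (pre ++ map (shift k) c2 ++ post) in
      transitivity (dc w d);
      [ apply (diagram_rewrite K A 3 strand_of idem_of cell_of strands_idem atoms_kbar
                 w c pre k u c1 c2 post); [vm_compute; reflexivity .. | exact H] | ]
    end
  end.

Ltac rewrite_diagram_dir sym lem pre k post :=
  let H := fresh in pose proof lem as H;
  repeat match type of H with _ -> _ => specialize (H ltac:(lia)) end;
  (match sym with true => apply eq_sym in H | false => idtac end);
  let pre := constr:(pre : diagram) in let post := constr:(post : diagram) in
  rewrite_diagram_with H pre k post; clear H.

(* [rewrite_diagram lem at pre k post], for [lem : dc u c1 = dc u c2], turns a goal
   [dc w c = _] with [c] equivalent to [pre ++ map (shift k) c1 ++ post] into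
   [dc w (pre ++ map (shift k) c2 ++ post) = _]; index bounds in [lem] are solved by [lia]. *)
Tactic Notation "rewrite_diagram" constr(lem) "at" uconstr(pre) constr(k) uconstr(post) :=
  rewrite_diagram_dir false lem pre k post.
Tactic Notation "rewrite_diagram" "<-" constr(lem) "at" uconstr(pre) constr(k) uconstr(post) :=
  rewrite_diagram_dir true lem pre k post.

Ltac name_leaves :=
  change (b0 D) with (idem_of 0) in *; change (b1 D) with (idem_of 1) in *;
  change (b2 D) with (idem_of 2) in *; change (m0 D) with (cell_of (Mu 0)) in *;
  change (m1 D) with (cell_of (Mu 1)) in *; change (m2 D) with (cell_of (Mu 2)) in *;
  change (e0 D) with (cell_of (Eta 0)) in *; change (e1 D) with (cell_of (Eta 1)) in *;
  change (e2 D) with (cell_of (Eta 2)) in *; change (l01 D) with (cell_of (Lam 0 1)) in *;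
  change (l02 D) with (cell_of (Lam 0 2)) in *; change (l12 D) with (cell_of (Lam 1 2)) in *.

Ltac strand_cases i := destruct i as [|[|[|?]]]; [| | | exfalso; lia].
Ltac pair_cases i j := destruct i as [|[|?]], j as [|[|[|?]]]; try (exfalso; lia).
Ltac close_with E := rewrite_diagram E at [] 0 []; diagram_equiv.
Ltac reify_and_close E := revert E; reify; intro E; close_with E.

Lemma monad_assoc i : i < 3 -> dc [i; i; i] [μ i @ 0; μ i @ 0] = dc [i; i; i] [μ i @ 1; μ i @ 0].
Proof.
  intro Hi; destruct (strand_monad i Hi) as (_ & _ & _ & E & _).
  strand_cases i; reify_and_close E.
Qed.

Lemma monad_unit_r i : i < 3 -> dc [i] [η i @ 1; μ i @ 0] = dc [i] [].
Proof.
  intro Hi; destruct (strand_monad i Hi) as (_ & _ & _ & _ & E & _).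
  strand_cases i; reify_and_close E.
Qed.

Lemma monad_unit_l i : i < 3 -> dc [i] [η i @ 0; μ i @ 0] = dc [i] [].
Proof.
  intro Hi; destruct (strand_monad i Hi) as (_ & _ & _ & _ & _ & E).
  strand_cases i; reify_and_close E.
Qed.

Lemma lam_mu_t i j : i < j < 3 ->
  dc [j; j; i] [μ j @ 0; λ i j @ 0] = dc [j; j; i] [λ i j @ 1; λ i j @ 0; μ j @ 1].
Proof.
  intro Hij; destruct (strand_wdl i j Hij) as (_ & _ & _ & E & _).
  pair_cases i j; reify_and_close E.
Qed.

Lemma lam_mu_s i j : i < j < 3 ->
  dc [j; i; i] [μ i @ 1; λ i j @ 0] = dc [j; i; i] [λ i j @ 0; λ i j @ 1; μ i @ 0].
Proof.
  intro Hij; destruct (strand_wdl i j Hij) as (_ & _ & _ & _ & E & _).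
  pair_cases i j; reify_and_close E.
Qed.

Lemma lam_eta_t i j : i < j < 3 ->
  dc [i] [η j @ 0; λ i j @ 0] = dc [i] [η j @ 1; η i @ 2; λ i j @ 1; μ i @ 0].
Proof.
  intro Hij; destruct (strand_wdl i j Hij) as (_ & _ & _ & _ & _ & E & _).
  pair_cases i j; reify_and_close E.
Qed.

Lemma lam_eta_s i j : i < j < 3 ->
  dc [j] [η i @ 1; λ i j @ 0] = dc [j] [η i @ 0; η j @ 0; λ i j @ 0; μ j @ 1].
Proof.
  intro Hij; destruct (strand_wdl i j Hij) as (_ & _ & _ & _ & _ & _ & E).
  pair_cases i j; reify_and_close E.
Qed.

Lemma yang_baxter :
  dc [2; 1; 0] [λ 1 2 @ 0; λ 0 2 @ 1; λ 0 1 @ 0] = dc [2; 1; 0] [λ 0 1 @ 1; λ 0 2 @ 0; λ 1 2 @ 1].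
Proof.
  destruct HD as (_ & _ & _ & E); name_leaves; reify_and_close E.
Qed.

Ltac for_each_pair tac :=
  let Hij := fresh in intro Hij;
  lazymatch type of Hij with ?i < ?j < _ => pair_cases i j end;
  lazymatch goal with _ : ?i < ?j < 3 |- _ => tac i j end.

Lemma lbar_alt i j : i < j < 3 ->
  dc [i; j] (lbar_d i j) = dc [i; j] [η j @ 0; λ i j @ 0; μ j @ 1].
Proof.
  for_each_pair ltac:(fun i j =>
    rewrite_diagram (lam_eta_s i j) at [] 1 [μ i @ 0];
    rewrite_diagram <- (lam_eta_t i j) at [] 0 [μ j @ 1];
    diagram_equiv).
Qed.

Lemma lbar_lam i j : i < j < 3 ->
  dc [j; i] (λ i j @ 0 :: lbar_d i j) = dc [j; i] [λ i j @ 0].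
Proof.
  for_each_pair ltac:(fun i j =>
    rewrite_diagram <- (lam_mu_s i j) at [η i @ 2] 0 [];
    rewrite_diagram (monad_unit_r i) at [] 1 [λ i j @ 0];
    diagram_equiv).
Qed.

Lemma lbar_idem i j : i < j < 3 ->
  dc [i; j] (lbar_d i j ++ lbar_d i j) = dc [i; j] (lbar_d i j).
Proof.
  for_each_pair ltac:(fun i j =>
    rewrite_diagram (monad_assoc i) at [η i @ 2; λ i j @ 1; η i @ 3; λ i j @ 2] 0 [];
    rewrite_diagram (lbar_lam i j) at [η i @ 2] 1 [μ i @ 0];
    diagram_equiv).
Qed.

Lemma larrow_idem :
  dc [0; 1; 2] (larrow_d ++ larrow_d) = dc [0; 1; 2] larrow_d.
Proof.
  rewrite_diagram <- (monad_assoc 2) at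
    [η 2 @ 0; η 2 @ 0; λ 0 2 @ 1; λ 0 2 @ 0; λ 1 2 @ 2; λ 1 2 @ 1] 2 [].
  rewrite_diagram <- (lam_mu_t 1 2) at [η 2 @ 0; η 2 @ 0; λ 0 2 @ 1; λ 0 2 @ 0] 1 [μ 2 @ 2].
  rewrite_diagram <- (lam_mu_t 0 2) at [η 2 @ 0; η 2 @ 0] 0 [λ 1 2 @ 1; μ 2 @ 2].
  rewrite_diagram (monad_unit_r 2) at [η 2 @ 0] 0 [λ 0 2 @ 0; λ 1 2 @ 1; μ 2 @ 2].
  diagram_equiv.
Qed.

Lemma lam2_lbar01 :
  dc [2; 0; 1] (map (shift 1) lbar01_d ++ lam2_d ++ lbar01_d)
  = dc [2; 0; 1] (map (shift 1) lbar01_d ++ lam2_d).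
Proof.
  rewrite_diagram (lam_mu_s 0 2) at [η 0 @ 3; λ 0 1 @ 2] 0 [λ 1 2 @ 1; η 0 @ 2; λ 0 1 @ 1; μ 0 @ 0].
  rewrite_diagram (monad_assoc 0) at
    [λ 0 2 @ 0; η 0 @ 3; λ 0 1 @ 2; λ 0 2 @ 1; λ 1 2 @ 2; η 0 @ 3; λ 0 1 @ 2] 0 [].
  rewrite_diagram <- yang_baxter at [λ 0 2 @ 0; η 0 @ 3] 1 [η 0 @ 3; λ 0 1 @ 2; μ 0 @ 1; μ 0 @ 0].
  rewrite_diagram (lbar_lam 0 1) at [λ 0 2 @ 0; λ 1 2 @ 1; η 0 @ 3; λ 0 2 @ 2] 1 [μ 0 @ 0].
  rewrite_diagram yang_baxter at [λ 0 2 @ 0; η 0 @ 3] 1 [μ 0 @ 0].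
  rewrite_diagram <- (lam_mu_s 0 2) at [η 0 @ 3; λ 0 1 @ 2] 0 [λ 1 2 @ 1].
  diagram_equiv.
Qed.

Lemma lbar012_idem :
  dc [0; 1; 2] (lbar012_d ++ lbar012_d) = dc [0; 1; 2] lbar012_d.
Proof.
  rewrite_diagram lam2_lbar01 at [η 2 @ 0; η 2 @ 0] 1 [μ 2 @ 3; λ 0 2 @ 0; λ 1 2 @ 1; μ 2 @ 2].
  rewrite_diagram larrow_idem at [η 0 @ 2; λ 0 1 @ 1; μ 0 @ 0] 0 [].
  diagram_equiv.
Qed.

Lemma lbar012_phi :
  dc [0; 2] (phi_d ++ lbar012_d) = dc [0; 2] phi_d.
Proof.
  rewrite_diagram lbar012_idem at [η 1 @ 1] 0 [].
  diagram_equiv.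
Qed.

Lemma lbar02_phi :
  dc [0; 2] (lbar02_d ++ phi_d) = dc [0; 2] phi_d.
Proof.
  rewrite_diagram <- (lam_eta_t 0 1) at
    [η 2 @ 0; η 0 @ 3; λ 0 2 @ 2; μ 0 @ 1] 1 [λ 0 2 @ 0; λ 1 2 @ 1; μ 2 @ 2].
  rewrite_diagram <- yang_baxter at [η 1 @ 0; η 2 @ 0; η 0 @ 4; λ 0 2 @ 3; μ 0 @ 2] 0 [μ 2 @ 2].
  rewrite_diagram (lbar_alt 0 2) at [η 1 @ 0; η 2 @ 0; λ 1 2 @ 0] 2 [λ 0 2 @ 1; λ 0 1 @ 0; μ 2 @ 2].
  rewrite_diagram <- (monad_assoc 2) at
    [η 1 @ 0; η 2 @ 0; λ 1 2 @ 0; η 2 @ 2; λ 0 2 @ 2; λ 0 2 @ 1; λ 0 1 @ 0] 2 [].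
  rewrite_diagram <- (lam_mu_t 0 2) at
    [η 1 @ 0; η 2 @ 0; λ 1 2 @ 0; η 2 @ 2] 1 [λ 0 1 @ 0; μ 2 @ 2].
  rewrite_diagram (monad_unit_r 2) at
    [η 1 @ 0; η 2 @ 0; λ 1 2 @ 0] 1 [λ 0 2 @ 1; λ 0 1 @ 0; μ 2 @ 2].
  rewrite_diagram yang_baxter at [η 1 @ 0; η 2 @ 0] 0 [μ 2 @ 2].
  rewrite_diagram (lam_eta_t 0 1) at [η 2 @ 0] 1 [λ 0 2 @ 0; λ 1 2 @ 1; μ 2 @ 2].
  diagram_equiv.
Qed.

Lemma phi_unit_diagram :
  dc [] (unit02_d ++ phi_d) = dc [] unit012_d.
Proof.
  rewrite_diagram <- (monad_unit_l 0) at [η 0 @ 0; η 2 @ 0; η 2 @ 0; λ 0 2 @ 1] 1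
    [η 0 @ 2; η 1 @ 2; λ 0 1 @ 2; μ 0 @ 1; λ 0 2 @ 0; λ 1 2 @ 1; μ 2 @ 2].
  rewrite_diagram lbar02_phi at [η 0 @ 0; η 2 @ 1] 0 [].
  rewrite_diagram <- larrow_idem at [η 0 @ 0; η 0 @ 0; η 1 @ 1; λ 0 1 @ 1; μ 0 @ 0; η 2 @ 2] 0 [].
  rewrite_diagram (monad_unit_r 2) at
    [η 0 @ 0; η 0 @ 0; η 2 @ 0; η 2 @ 0; η 1 @ 3; λ 0 1 @ 3; μ 0 @ 2; λ 0 2 @ 1; λ 0 2 @ 0;
     λ 1 2 @ 2] 3 [λ 1 2 @ 1; μ 2 @ 2].
  rewrite_diagram <- lam2_lbar01 at
    [η 0 @ 0; η 2 @ 0; η 2 @ 0; η 1 @ 3] 1 [λ 0 2 @ 0; λ 1 2 @ 1; μ 2 @ 2].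
  rewrite_diagram (monad_unit_l 0) at [η 0 @ 0; η 1 @ 0; η 2 @ 0; η 2 @ 0; λ 0 1 @ 2] 2
    [λ 0 2 @ 1; λ 1 2 @ 2; η 0 @ 3; λ 0 1 @ 2; μ 0 @ 1; λ 0 2 @ 0; λ 1 2 @ 1; μ 2 @ 2].
  diagram_equiv.
Qed.

Lemma mult01_lbar01 :
  dc [0; 1; 0; 1] (mult01_raw_d ++ lbar01_d) = dc [0; 1; 0; 1] mult01_raw_d.
Proof.
  rewrite_diagram (monad_assoc 0) at [λ 0 1 @ 1; μ 1 @ 2; η 0 @ 3; λ 0 1 @ 2] 0 [].
  rewrite_diagram (lam_eta_s 0 1) at [λ 0 1 @ 1; μ 1 @ 2] 2 [μ 0 @ 1; μ 0 @ 0].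
  rewrite_diagram <- (monad_assoc 1) at
    [λ 0 1 @ 1; η 0 @ 2; η 1 @ 2; λ 0 1 @ 2; μ 0 @ 1; μ 0 @ 0] 1 [].
  rewrite_diagram <- (lam_eta_s 0 1) at [λ 0 1 @ 1] 2 [μ 0 @ 1; μ 0 @ 0; μ 1 @ 1].
  rewrite_diagram (lbar_lam 0 1) at [] 1 [μ 0 @ 0; μ 1 @ 1].
  diagram_equiv.
Qed.

Lemma phi01_mult :
  dc [0; 0] (μ 0 @ 0 :: phi01_d) = dc [0; 0] (map (shift 1) phi01_d ++ phi01_d ++ mult01_raw_d).
Proof.
  rewrite_diagram <- (lbar_idem 0 1) at [μ 0 @ 0; η 1 @ 1] 0 [].
  rewrite_diagram (lbar_alt 0 1) at [μ 0 @ 0; η 0 @ 1; η 1 @ 1; λ 0 1 @ 1; μ 0 @ 0] 0 [].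
  rewrite_diagram (monad_assoc 0) at [η 1 @ 0; η 0 @ 3; η 1 @ 3; λ 0 1 @ 3] 1 [λ 0 1 @ 0; μ 1 @ 1].
  rewrite_diagram (lam_mu_s 0 1) at [η 1 @ 0; η 0 @ 3; η 1 @ 3; λ 0 1 @ 3; μ 0 @ 2] 0 [μ 1 @ 1].
  rewrite_diagram (lam_eta_t 0 1) at
    [η 0 @ 2; η 1 @ 2; λ 0 1 @ 2; μ 0 @ 1] 0 [λ 0 1 @ 1; μ 0 @ 0; μ 1 @ 1].
  diagram_equiv.
Qed.

Lemma lam2_mu_t :
  dc [2; 2; 0; 1] (μ 2 @ 0 :: lam2_d)
  = dc [2; 2; 0; 1] (map (shift 1) lam2_d ++ lam2_d ++ [μ 2 @ 2]).
Proof.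
  rewrite_diagram (lam_mu_t 0 2) at [] 0 [λ 1 2 @ 1].
  rewrite_diagram (lam_mu_t 1 2) at [λ 0 2 @ 1; λ 0 2 @ 0] 1 [].
  diagram_equiv.
Qed.

Lemma lam2_mu_s :
  dc [2; 0; 1; 0; 1] (map (shift 1) mult01_raw_d ++ lam2_d)
  = dc [2; 0; 1; 0; 1] (lam2_d ++ map (shift 2) lam2_d ++ mult01_raw_d).
Proof.
  rewrite_diagram (lam_mu_s 0 2) at [λ 0 1 @ 2; μ 1 @ 3] 0 [λ 1 2 @ 1].
  rewrite_diagram (lam_mu_s 1 2) at [λ 0 2 @ 0; λ 0 1 @ 2; λ 0 2 @ 1; μ 0 @ 0] 1 [].
  rewrite_diagram <- yang_baxter at [λ 0 2 @ 0] 1 [μ 0 @ 0; λ 1 2 @ 2; μ 1 @ 1].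
  diagram_equiv.
Qed.

Lemma lam2_phi01 :
  dc [2; 0] (map (shift 1) phi01_d ++ lam2_d) = dc [2; 0] (λ 0 2 @ 0 :: phi_d).
Proof.
  rewrite_diagram <- (lam_eta_t 0 1) at [] 1 [λ 0 2 @ 0; λ 1 2 @ 1].
  rewrite_diagram <- yang_baxter at [η 1 @ 1] 0 [].
  rewrite_diagram (lam_eta_s 1 2) at [] 0 [λ 0 2 @ 1; λ 0 1 @ 0].
  rewrite_diagram (lam_mu_t 0 2) at [η 1 @ 0; η 2 @ 0; λ 1 2 @ 0] 1 [λ 0 1 @ 0].
  rewrite_diagram yang_baxter at [η 1 @ 0; η 2 @ 0; λ 0 2 @ 2] 0 [μ 2 @ 2].
  rewrite_diagram (lam_eta_t 0 1) at [η 2 @ 0; λ 0 2 @ 1] 1 [λ 0 2 @ 0; λ 1 2 @ 1; μ 2 @ 2].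
  diagram_equiv.
Qed.

Lemma larrow_mult012_r :
  dc [0; 1; 2; 0; 1; 2] (map (shift 3) larrow_d ++ mult012_raw_d)
  = dc [0; 1; 2; 0; 1; 2] mult012_raw_d.
Proof.
  rewrite_diagram <- (monad_assoc 2) at
    [η 2 @ 3; λ 0 2 @ 3; λ 0 2 @ 2; λ 0 1 @ 1; μ 0 @ 0; λ 1 2 @ 3; λ 1 2 @ 2; μ 1 @ 1] 2 [].
  rewrite_diagram <- lam2_mu_t at [η 2 @ 3] 2 [λ 0 1 @ 1; μ 0 @ 0; μ 1 @ 1; μ 2 @ 2].
  rewrite_diagram (monad_unit_r 2) at
    [] 2 [λ 0 2 @ 2; λ 0 1 @ 1; μ 0 @ 0; λ 1 2 @ 2; μ 1 @ 1; μ 2 @ 2].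
  diagram_equiv.
Qed.

Lemma larrow_mult012_l :
  dc [0; 1; 2; 0; 1; 2] (larrow_d ++ mult012_raw_d)
  = dc [0; 1; 2; 0; 1; 2] (mult012_raw_d ++ larrow_d).
Proof.
  rewrite_diagram lam2_mu_t at
    [η 2 @ 0; λ 0 2 @ 0; λ 1 2 @ 1] 2 [λ 0 1 @ 1; μ 0 @ 0; μ 1 @ 1; μ 2 @ 2].
  rewrite_diagram (monad_assoc 2) at
    [η 2 @ 0; λ 0 2 @ 0; λ 1 2 @ 1; λ 0 2 @ 3; λ 0 2 @ 2; λ 0 1 @ 1; μ 0 @ 0; λ 1 2 @ 3; λ 1 2 @ 2;
     μ 1 @ 1] 2 [].
  rewrite_diagram <- lam2_mu_s at [η 2 @ 0; λ 0 2 @ 3; λ 1 2 @ 4; μ 2 @ 5] 0 [μ 2 @ 2].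
  diagram_equiv.
Qed.

Lemma larrow_absorbed :
  dc [0; 0; 1; 2; 2] (phi01_d ++ map (shift 2) larrow_d ++ mult01_raw_d ++ [μ 2 @ 2] ++ larrow_d)
  = dc [0; 0; 1; 2; 2] (phi01_d ++ mult01_raw_d ++ [μ 2 @ 2] ++ larrow_d).
Proof.
  rewrite_diagram (monad_assoc 2) at
    [η 2 @ 0; η 0 @ 2; η 1 @ 2; λ 0 1 @ 2; μ 0 @ 1; η 2 @ 3; λ 0 2 @ 3; λ 0 1 @ 2; μ 0 @ 1;
     λ 0 2 @ 0; λ 1 2 @ 3; μ 1 @ 2; λ 1 2 @ 1] 3 [μ 2 @ 2].
  rewrite_diagram lam2_mu_s at
    [η 2 @ 0; η 0 @ 2; η 1 @ 2; λ 0 1 @ 2; μ 0 @ 1; η 2 @ 3; λ 0 2 @ 3; λ 1 2 @ 4;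
     μ 2 @ 6; μ 2 @ 5] 0 [μ 2 @ 2].
  rewrite_diagram larrow_mult012_r at
    [η 2 @ 0; η 0 @ 2; η 1 @ 2; λ 0 1 @ 2; μ 0 @ 1; λ 0 2 @ 0; λ 1 2 @ 1; μ 2 @ 5] 0 [].
  rewrite_diagram <- lam2_mu_s at
    [η 2 @ 0; η 0 @ 2; η 1 @ 2; λ 0 1 @ 2; μ 0 @ 1; μ 2 @ 5] 0 [μ 2 @ 2].
  diagram_equiv.
Qed.

Lemma phi_phi_mult012 :
  dc [0; 2; 0; 2] (map (shift 2) phi_d ++ phi_d ++ mult012_d)
  = dc [0; 2; 0; 2] (map (shift 2) phi01_d ++ phi01_d ++ mult012_raw_d ++ larrow_d).
Proof.
  rewrite_diagram larrow_mult012_r at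
    [η 2 @ 0; η 2 @ 0; η 0 @ 3; η 1 @ 3; λ 0 1 @ 3; μ 0 @ 2; λ 0 2 @ 1; λ 1 2 @ 2; μ 2 @ 3;
     η 0 @ 5; η 1 @ 5; λ 0 1 @ 5; μ 0 @ 4] 1
    [η 0 @ 3; λ 0 1 @ 2; μ 0 @ 1; λ 0 2 @ 0; λ 1 2 @ 1; μ 2 @ 2].
  rewrite_diagram larrow_mult012_l at
    [η 2 @ 0; η 0 @ 2; η 1 @ 2; λ 0 1 @ 2; μ 0 @ 1; η 0 @ 5; η 1 @ 5; λ 0 1 @ 5; μ 0 @ 4] 1
    [η 0 @ 3; λ 0 1 @ 2; μ 0 @ 1; λ 0 2 @ 0; λ 1 2 @ 1; μ 2 @ 2].
  rewrite_diagram <- mult01_lbar01 at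
    [η 2 @ 0; η 2 @ 0; η 0 @ 3; η 1 @ 3; λ 0 1 @ 3; μ 0 @ 2; η 0 @ 6; η 1 @ 6; λ 0 1 @ 6; μ 0 @ 5;
     λ 0 2 @ 4; λ 1 2 @ 5; μ 2 @ 6] 2
    [λ 0 2 @ 1; λ 1 2 @ 2; η 0 @ 3; λ 0 1 @ 2; μ 0 @ 1; λ 0 2 @ 0; λ 1 2 @ 1; μ 2 @ 3; μ 2 @ 2].
  rewrite_diagram lbar012_idem at
    [η 0 @ 1; η 1 @ 1; λ 0 1 @ 1; μ 0 @ 0; η 0 @ 4; η 1 @ 4; λ 0 1 @ 4; μ 0 @ 3; λ 0 2 @ 2;
     λ 0 1 @ 1; μ 0 @ 0; λ 1 2 @ 2; μ 1 @ 1; μ 2 @ 2] 0 [].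
  rewrite_diagram mult01_lbar01 at
    [η 2 @ 0; η 0 @ 2; η 1 @ 2; λ 0 1 @ 2; μ 0 @ 1; η 0 @ 5; η 1 @ 5; λ 0 1 @ 5; μ 0 @ 4;
     λ 0 2 @ 3; λ 1 2 @ 4; μ 2 @ 5] 1 [λ 0 2 @ 0; λ 1 2 @ 1; μ 2 @ 2].
  diagram_equiv.
Qed.

Lemma phi_mult_diagram :
  dc [0; 2; 0; 2] (mult02_d ++ phi_d) = dc [0; 2; 0; 2] (map (shift 2) phi_d ++ phi_d ++ mult012_d).
Proof.
  rewrite_diagram phi01_mult at [η 2 @ 0; λ 0 2 @ 2; μ 2 @ 3] 1 [λ 0 2 @ 0; λ 1 2 @ 1; μ 2 @ 2].
  rewrite_diagram <- larrow_absorbed at [λ 0 2 @ 1; η 0 @ 2; η 1 @ 2; λ 0 1 @ 2; μ 0 @ 1] 0 [].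
  rewrite_diagram <- lam2_phi01 at [η 2 @ 0; η 0 @ 2; η 1 @ 2; λ 0 1 @ 2; μ 0 @ 1] 3
    [λ 0 1 @ 2; μ 0 @ 1; λ 0 2 @ 0; μ 1 @ 2; λ 1 2 @ 1; μ 2 @ 3; μ 2 @ 2].
  rewrite_diagram <- phi_phi_mult012 at [] 0 [].
  diagram_equiv.
Qed.

Ltac reify_composite :=
  unfold mult012, unit012, phi1_02, mult02, unit02, lbar012, larrow012, lbar01, lbar02, wdl_idem;
  name_leaves; reify; diagram_equiv.

Lemma lbar02_reify : lbar02 D = dc [0; 2] lbar02_d.
Proof. reify_composite. Qed.
Lemma lbar012_reify : lbar012 D = dc [0; 1; 2] lbar012_d.
Proof. reify_composite. Qed.
Lemma phi_reify : phi1_02 D = dc [0; 2] phi_d.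
Proof. reify_composite. Qed.
Lemma mult02_reify : mult02 D = dc [0; 2; 0; 2] mult02_d.
Proof. reify_composite. Qed.
Lemma mult012_reify : mult012 D = dc [0; 1; 2; 0; 1; 2] mult012_d.
Proof. reify_composite. Qed.
Lemma unit02_reify : unit02 D = dc [] unit02_d.
Proof. reify_composite. Qed.
Lemma unit012_reify : unit012 D = dc [] unit012_d.
Proof. reify_composite. Qed.

Lemma reified_kbar w c : diagram_ok 3 w c = true ->
  kbar_cell K A strand_of idem_of w (diagram_out w c) (dc w c).
Proof.
  intro Hc.
  apply (diagram_cell_kbar K A 3 strand_of idem_of cell_of strands_idem atoms_kbar w c Hc).
Qed.

Lemma phi_bar_cell :
  bar_cell (comp1 (s0 D) (s2 D)) (lbar02 D) (comp1 (s0 D) (comp1 (s1 D) (s2 D))) (lbar012 D)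
           (phi1_02 D).
Proof.
  destruct (reified_kbar [0; 2] phi_d eq_refl) as (S & T & _).
  rewrite lbar02_reify, lbar012_reify, phi_reify.
  split; [exact S|]; split; [exact T|]; split; reify.
  - close_with lbar012_phi.
  - close_with lbar02_phi.
Qed.

Lemma phi_mult :
  vcomp (phi1_02 D) (mult02 D) = vcomp (mult012 D) (hcomp (phi1_02 D) (phi1_02 D)).
Proof. rewrite phi_reify, mult02_reify, mult012_reify; reify; close_with phi_mult_diagram. Qed.

Lemma phi_unit : vcomp (phi1_02 D) (unit02 D) = unit012 D.
Proof. rewrite phi_reify, unit02_reify, unit012_reify; reify; close_with phi_unit_diagram. Qed.

Lemma phi_mult_absorb :
  vcomp (phi1_02 D) (mult02 D)
  = vcomp (mult012 D) (vcomp (hcomp (phi1_02 D) (lbar012 D)) (hcomp (lbar02 D) (phi1_02 D))).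
Proof.
  destruct phi_bar_cell as (S & T & L & R).
  rewrite vcomp_hcomp_absorb; [exact phi_mult | | | exact R | exact L].
  - rewrite S, lbar02_reify; exact (proj1 (proj2 (reified_kbar [0; 2] lbar02_d eq_refl))).
  - rewrite T, lbar012_reify; exact (eq_sym (proj1 (reified_kbar [0; 1; 2] lbar012_d eq_refl))).
Qed.

End ThreeLaws.

Theorem lemma4p2 (K : TwoCat) (A : obj K) (D : wdl2_data A) :
  is_wdl2 D ->
  monad_hom (comp1 (s0 D) (s2 D)) (lbar02 D) (mult02 D) (unit02 D)
            (comp1 (s0 D) (comp1 (s1 D) (s2 D))) (lbar012 D) (mult012 D) (unit012 D)
            (phi1_02 D)
  /\
  mnd_1cell (comp1 (s0 D) (comp1 (s1 D) (s2 D))) (lbar012 D) (mult012 D) (unit012 D)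
            (comp1 (s0 D) (s2 D)) (lbar02 D) (mult02 D) (unit02 D)
            (id1 A) (id2 (id1 A)) (phi1_02 D).
Proof.
  intro HD.
  destruct (phi_bar_cell K A D HD) as (Hsrc & Htgt & Hleft & Hright).
  pose proof (phi_mult K A D HD) as Hmult.
  pose proof (phi_unit K A D HD) as Hunit.
  pose proof (phi_mult_absorb K A D HD) as Habsorb.
  pose proof (vcomp_id_l _ _ _ (id2 (id1 A))) as Hid; rewrite tgt_id2 in Hid.
  unfold monad_hom, mnd_1cell, idem.
  rewrite !hcomp_id_l, !hcomp_id_r, comp1_id_l, comp1_id_r, src_id2, tgt_id2.
  repeat split; auto.
Qed.
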